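(* Let $P\subseteq\mathbb{R}^2$ be a nonempty closed convex set such that $\tau P=P^{\circ}$. If $\gamma$ is a real $2\times 2$ matrix with $\det\gamma=\pm1$, then $\tau(\gamma P)=(\gamma P)^{\circ}$.
   Context: $\tau:\mathbb{R}^2\to\mathbb{R}^2$ denotes the $90^\circ$ counterclockwise rotation. The polar of a set $S\subseteq\mathbb{R}^2$ is $S^{\circ}=\{x\in\mathbb{R}^2: y^\top x\le 1\text{ for all }y\in S\}$. *)

From HB Require Import structures.
From mathcomp Require Import all_boot all_order all_algebra.
From mathcomp Require Import all_classical all_reals all_analysis.
Set Implicit Arguments. Unset Strict Implicit. Unset Printing Implicit Defensive.
Import Order.TTheory GRing.Theory Num.Theory.
Local Open Scope ring_scope.
Local Open Scope classical_set_scope.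

Definition dotv (R : realType) (y x : 'cV[R]_2) : R := (y^T *m x) ord0 ord0.

(* tau: rotation by 90 degrees counterclockwise: (x1,x2) |-> (-x2, x1) *)
Definition tau_mx (R : realType) : 'M[R]_2 :=
  \matrix_(i < 2, j < 2) (if (i == 0) && (j == 1) then -1
                          else if (i == 1) && (j == 0) then 1 else 0).

Definition tau (R : realType) (x : 'cV[R]_2) : 'cV[R]_2 := tau_mx R *m x.

Definition polar (R : realType) (S : set 'cV[R]_2) : set 'cV[R]_2 :=
  [set x | forall y, S y -> dotv y x <= 1].

Definition convex_set2 (R : realType) (S : set 'cV[R]_2) : Prop :=
  forall x y (t : R), S x -> S y -> 0 <= t <= 1 -> S (t *: x + (1 - t) *: y).

Definition mx_image (R : realType) (g : 'M[R]_2) (S : set 'cV[R]_2) : set 'cV[R]_2 :=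
  (fun x => g *m x) @` S.

(* closedness of a subset of R^2 for the standard (product) topology;
   R^o is needed only so that the matrix topology instance is found. *)
Definition closed2 (R : realType) (S : set 'cV[R]_2) : Prop :=
  closed (S : set 'cV[R^o]_2).

(* The rotation tau is the standard symplectic form of the plane:
   g^T tau g = (det g) tau for every 2x2 matrix g.  Hence g^T maps tau (g P)
   onto tau ((det g) P), while the polar of g P is the g^T-preimage of the
   polar of P.  For det g = -1 one uses that tau P = P° forces P = -P,
   because (q, p) |-> q^T tau p is antisymmetric. *)

From HB Require Import structures.
From mathcomp Require Import all_boot all_order all_algebra.
From mathcomp Require Import all_classical all_reals all_analysis.
From mathcomp Require Import ring.
Import Order.TTheory GRing.Theory Num.Theory.
Local Open Scope ring_scope.
Local Open Scope classical_set_scope.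

Lemma big_ord2 (V : nmodType) (F : 'I_2 -> V) : \sum_(i < 2) F i = F 0 + F 1.
Proof.
by rewrite !big_ord_recl big_ord0 addr0; congr (_ + F _); apply/val_inj.
Qed.

Lemma ord2_cases (i : 'I_2) : i = 0 \/ i = 1.
Proof. by case: i => [[|[|//]] ?]; [left | right]; apply/val_inj. Qed.

Lemma det_mx2 (R : comPzRingType) (A : 'M[R]_2) :
  \det A = A 0 0 * A 1 1 - A 0 1 * A 1 0.
Proof.
rewrite (expand_det_row _ 0) big_ord2 /cofactor !det_mx11 !mxE /=.
have -> : lift 0 (0 : 'I_1) = 1 :> 'I_2 by apply/val_inj.
have -> : lift 1 (0 : 'I_1) = 0 :> 'I_2 by apply/val_inj.
by rewrite expr0 expr1; ring.
Qed.

Section Rotation.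
Variable R : realType.
Implicit Types (x y p q : 'cV[R]_2) (g : 'M[R]_2) (S : set 'cV[R]_2).

Lemma tau_mx_conj g : g^T *m tau_mx R *m g = \det g *: tau_mx R.
Proof.
rewrite det_mx2; apply/matrixP => i j; rewrite !mxE !big_ord2 !mxE !big_ord2 !mxE.
by case: (ord2_cases i) => ->; case: (ord2_cases j) => -> /=; ring.
Qed.

Lemma mulmx_tau g p : g^T *m tau (g *m p) = tau (\det g *: p).
Proof. by rewrite /tau !mulmxA tau_mx_conj -scalemxAl -scalemxAr. Qed.

Lemma tau_tau x : tau (tau x) = - x.
Proof.
apply/matrixP => i j; rewrite /tau !mxE !big_ord2 !mxE !big_ord2 !mxE.
have -> : j = 0 by apply/val_inj; case: j => [[|]].
by case: (ord2_cases i) => -> /=; ring.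
Qed.

Lemma tau_inj : injective (@tau R).
Proof. by move=> x y /(congr1 (@tau R)); rewrite !tau_tau => /oppr_inj. Qed.

Lemma dotv_mulmxl g y x : dotv (g *m y) x = dotv y (g^T *m x).
Proof. by rewrite /dotv trmx_mul mulmxA. Qed.

Lemma dotv_tauN q p : dotv q (tau (- p)) = dotv p (tau q).
Proof. by rewrite /dotv /tau !mxE !big_ord2 !mxE !big_ord2 !mxE /=; ring. Qed.

Lemma polar_mx_image g S :
  polar (mx_image g S) = (fun x => g^T *m x) @^-1` polar S.
Proof.
apply/seteqP; split=> x Sx /=.
  by move=> q Sq; rewrite -dotv_mulmxl; apply: Sx; exists q.
by move=> _ [q Sq <-]; rewrite dotv_mulmxl; apply: Sx.
Qed.

Lemma tau_mx_image g S : \det g != 0 ->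
  @tau R @` mx_image g S =
  (fun x => g^T *m x) @^-1` (@tau R @` ((fun p => \det g *: p) @` S)).
Proof.
move=> detg_neq0; have gTu : g^T \in unitmx by rewrite unitmxE det_tr unitfE.
apply/seteqP; split=> [_ [_ [p Sp <-] <-] | x [_ [p Sp <-] gTx]] /=.
  by rewrite mulmx_tau; exists (\det g *: p) => //; exists p.
exists (g *m p); first by exists p.
by apply: (can_inj (mulKmx gTu)); rewrite mulmx_tau.
Qed.

Lemma tau_polar_oppr S : @tau R @` S = polar S -> forall p, S p -> S (- p).
Proof.
move=> tauS p Sp.
have : polar S (tau (- p)).
  move=> q Sq; rewrite dotv_tauN.
  have tauS_q : polar S (tau q) by rewrite -tauS; exists q.
  exact: tauS_q.
by rewrite -tauS => -[p' Sp' /tau_inj <-].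
Qed.

Lemma scale_sign_image S (e : R) : (e = 1 \/ e = -1) ->
  (forall p, S p -> S (- p)) -> (fun p => e *: p) @` S = S.
Proof.
move=> e_sign S_oppr; apply/seteqP; split=> [_ [p Sp <-] | p Sp] /=.
  by case: e_sign => ->; [rewrite scale1r | rewrite scaleN1r; apply: S_oppr].
case: e_sign => ->; first by exists p; rewrite ?scale1r.
by exists (- p); [apply: S_oppr | rewrite scaleN1r opprK].
Qed.

End Rotation.

Theorem proposition3 (R : realType) (P : set 'cV[R]_2) (g : 'M[R]_2) :
  P !=set0 -> closed2 P -> convex_set2 P ->
  @tau R @` P = polar P ->
  (\det g = 1 \/ \det g = -1) ->
  @tau R @` (mx_image g P) = polar (mx_image g P).
Proof.
move=> _ _ _ tauP detg.
have detg_neq0 : \det g != 0 by case: detg => ->; rewrite ?oppr_eq0 oner_eq0.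
rewrite polar_mx_image tau_mx_image // scale_sign_image // ?tauP //.
exact: tau_polar_oppr.
Qed.
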